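(* Let $\alpha\ge0$, $\beta\ge0$, $\gamma<0$, $\omega^2=1$, $c,a\in\mathbb{R}$ with $ca>0$, $N\ge2$, and $r>0$. Consider $$\dot{x}_i=y_i+\frac{ca}{N}\sum_{j=1}^N(x_j-x_i),\qquad \dot{y}_i=-(\alpha x_i^2+\beta y_i^2-\gamma)y_i-\omega^2x_i+\frac{ca}{N}\sum_{j=1}^N(y_j-y_i),\quad i=1,\dots,N.$$ Suppose one of the following holds: (1) $\alpha=0$ and $3\beta r^2>\gamma-ca$; (2) $\alpha\neq0$, $\alpha>3\beta$, $r^2\le\frac{ca\alpha-3ca\beta}{\alpha^2}$, and $3\beta r^2>\gamma-ca$; (3) $\alpha\neq0$, $\alpha<3\beta$, $r^2\le\frac{3ca\beta-ca\alpha}{\alpha^2}$, and $\alpha r^2>\gamma-ca$; (4) $3ca\alpha\beta+\alpha^2(ca-\gamma)>0$, $r^2\ge\max\{\frac{ca\alpha-3ca\beta}{\alpha^2},\frac{3ca\beta-ca\alpha}{\alpha^2}\}$, and $\frac{ca\alpha+3ca\beta-2\sqrt{3c^2a^2\alpha\beta+\alpha^2ca(ca-\gamma)}}{\alpha^2}<r^2<\frac{ca\alpha+3ca\beta+2\sqrt{3c^2a^2\alpha\beta+\alpha^2ca(ca-\gamma)}}{\alpha^2}$. If $x_i(0)^2+y_i(0)^2\le r^2$ for all $i=1,\dots,N$, then $|x_i(t)-x_j(t)|+|y_i(t)-y_j(t)|\to0$ exponentially as $t\to\infty$ for all $i,j$ (complete synchronization). *)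

From Stdlib Require Import Reals.
From Coquelicot Require Import Coquelicot.
Open Scope R_scope.

(* Oscillators indexed by i = 0, ..., N-1.
   coupling N f i = sum_{j=0}^{N-1} (f j - f i). *)
Definition coupling (N : nat) (f : nat -> R) (i : nat) : R :=
  sum_f_R0 (fun j => f j - f i) (pred N).

Definition is_solution (alpha beta gamma omega c a : R) (N : nat)
  (x y : nat -> R -> R) : Prop :=
  forall t, 0 <= t -> forall i, (i < N)%nat ->
    is_derive (x i) t
      (y i t + c * a / INR N * coupling N (fun j => x j t) i) /\
    is_derive (y i) t
      (- (alpha * (x i t)^2 + beta * (y i t)^2 - gamma) * y i t
       - omega^2 * x i t
       + c * a / INR N * coupling N (fun j => y j t) i).

From Stdlib Require Import Reals Lra Lia.
From Coquelicot Require Import Coquelicot.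
Open Scope R_scope.

(* Write n_i = x_i^2 + y_i^2.  The nonlinear damping only dissipates and, since omega^2 = 1,
   the rotation is conservative, so n_i' <= (c a / N) sum_j (n_j - n_i).  Hence
   sum_i max(0, n_i - r^2)^2 is nonincreasing and the disk of radius r is invariant.
   Inside the disk, the mean value theorem writes the error e = (x_i - x_j, y_i - y_j) as
   e' = J e, where the symmetric part of -J is [[c a, alpha xi eta], [alpha xi eta,
   c a - gamma + alpha xi^2 + 3 beta eta^2]] for some (xi, eta) in the disk.  Each of the
   four conditions makes its determinant uniformly positive on the disk, so |e|^2 decays
   exponentially. *)

Lemma is_derive_sq_plus_sq (f g : R -> R) (t df dg : R) :
  is_derive f t df -> is_derive g t dg ->
  is_derive (fun s => f s ^ 2 + g s ^ 2) t (2 * f t * df + 2 * g t * dg).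
Proof.
  intros Hf Hg.
  pose proof (is_derive_plus _ _ t _ _ (is_derive_pow f 2 t df Hf)
                (is_derive_pow g 2 t dg Hg)) as H.
  replace (2 * f t * df + 2 * g t * dg)
    with (plus (INR 2 * df * f t ^ 1) (INR 2 * dg * g t ^ 1)).
  - exact H.
  - unfold plus; simpl; ring.
Qed.

Lemma is_derive_sub (f g : R -> R) (t df dg : R) :
  is_derive f t df -> is_derive g t dg -> is_derive (fun s => f s - g s) t (df - dg).
Proof. exact (is_derive_minus f g t df dg). Qed.

Lemma is_derive_sum_f_R0 (F : nat -> R -> R) (dF : nat -> R) (m : nat) (t : R) :
  (forall i, (i <= m)%nat -> is_derive (F i) t (dF i)) ->
  is_derive (fun s => sum_f_R0 (fun i => F i s) m) t (sum_f_R0 dF m).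
Proof.
  intros H. rewrite <- sum_n_Reals.
  apply (is_derive_ext (fun s => sum_n (fun i => F i s) m)).
  - intro s; apply sum_n_Reals.
  - apply (is_derive_sum_n (K := R_AbsRing) (V := R_NormedModule)); exact H.
Qed.

Lemma pos_part_sq_taylor (z h : R) :
  Rabs (Rmax 0 (z + h) ^ 2 - Rmax 0 z ^ 2 - 2 * Rmax 0 z * h) <= h * h.
Proof.
  destruct (Rle_dec 0 z); destruct (Rle_dec 0 (z + h));
    [rewrite (Rmax_right 0 z), (Rmax_right 0 (z + h)) by lra
    |rewrite (Rmax_right 0 z), (Rmax_left 0 (z + h)) by lra
    |rewrite (Rmax_left 0 z), (Rmax_right 0 (z + h)) by lra
    |rewrite (Rmax_left 0 z), (Rmax_left 0 (z + h)) by lra];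
    rewrite Rabs_right; nra.
Qed.

Lemma is_derive_pos_part_sq (l z : R) :
  is_derive (fun w => Rmax 0 (w - l) ^ 2) z (2 * Rmax 0 (z - l)).
Proof.
  apply is_derive_Reals. intros eps Heps.
  exists (mkposreal eps Heps). intros h Hh Hlt; simpl in Hlt.
  assert (Habs : 0 < Rabs h) by (apply Rabs_pos_lt; exact Hh).
  replace (z + h - l) with (z - l + h) by ring.
  replace ((Rmax 0 (z - l + h) ^ 2 - Rmax 0 (z - l) ^ 2) / h - 2 * Rmax 0 (z - l))
    with ((Rmax 0 (z - l + h) ^ 2 - Rmax 0 (z - l) ^ 2 - 2 * Rmax 0 (z - l) * h) / h)
    by (field; exact Hh).
  unfold Rdiv. rewrite Rabs_mult, Rabs_inv.
  apply Rle_lt_trans with (Rabs h * Rabs h * / Rabs h).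
  - apply Rmult_le_compat_r.
    + apply Rlt_le, Rinv_0_lt_compat, Habs.
    + rewrite <- Rabs_mult, (Rabs_right (h * h)) by nra. apply pos_part_sq_taylor.
  - replace (Rabs h * Rabs h * / Rabs h) with (Rabs h) by (field; lra). exact Hlt.
Qed.

Lemma is_derive_pos_part_sq_comp (f : R -> R) (l t df : R) :
  is_derive f t df -> is_derive (fun s => Rmax 0 (f s - l) ^ 2) t (2 * Rmax 0 (f t - l) * df).
Proof.
  intros Hf.
  replace (2 * Rmax 0 (f t - l) * df) with (scal df (2 * Rmax 0 (f t - l)))
    by (unfold scal; simpl; unfold mult; simpl; ring).
  exact (is_derive_comp (fun w => Rmax 0 (w - l) ^ 2) f t _ _ (is_derive_pos_part_sq l (f t)) Hf).
Qed.

Lemma le_at_0_of_derive_nonpos (F dF : R -> R) :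
  (forall s, 0 <= s -> is_derive F s (dF s)) -> (forall s, 0 <= s -> dF s <= 0) ->
  forall t, 0 <= t -> F t <= F 0.
Proof.
  intros HD Hneg t Ht.
  destruct (MVT_gen F 0 t dF) as [s [Hs Heq]].
  - intros s Hs. rewrite Rmin_left in Hs by lra. apply HD. lra.
  - intros s Hs. rewrite Rmin_left in Hs by lra.
    apply continuity_pt_filterlim, (ex_derive_continuous (K := R_AbsRing) (V := R_NormedModule)).
    exists (dF s). apply HD. lra.
  - rewrite Rmin_left, Rmax_right in Hs by lra.
    pose proof (Hneg s ltac:(lra)). nra.
Qed.

Lemma le_exp_of_derive_le (V dV : R -> R) (k : R) :
  (forall s, 0 <= s -> is_derive V s (dV s)) -> (forall s, 0 <= s -> dV s <= - k * V s) ->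
  forall t, 0 <= t -> V t <= V 0 * exp (- k * t).
Proof.
  intros HD Hrate t Ht.
  assert (HG : forall s, 0 <= s -> is_derive (fun s => V s * exp (k * s)) s
                 ((dV s + k * V s) * exp (k * s))).
  { intros s Hs.
    replace ((dV s + k * V s) * exp (k * s))
      with (dV s * exp (k * s) + V s * (k * exp (k * s))) by ring.
    apply (is_derive_mult V (fun s => exp (k * s))); [apply HD; exact Hs| |apply Rmult_comm].
    auto_derive; [exact I | ring]. }
  pose proof (le_at_0_of_derive_nonpos _ _ HG) as Hmono.
  assert (HGt : V t * exp (k * t) <= V 0 * exp (k * 0)).
  { apply Hmono; [|exact Ht]. intros s Hs.
    pose proof (Hrate s Hs); pose proof (exp_pos (k * s)); nra. }
  rewrite Rmult_0_r, exp_0, Rmult_1_r in HGt.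
  replace (V t) with (V t * exp (k * t) * exp (- k * t))
    by (rewrite Rmult_assoc, <- exp_plus; replace (k * t + - k * t) with 0 by ring;
        rewrite exp_0; ring).
  apply Rmult_le_compat_r; [apply Rlt_le, exp_pos | exact HGt].
Qed.

Lemma abs_add_le_sqrt (u v : R) : Rabs u + Rabs v <= sqrt (2 * (u ^ 2 + v ^ 2)).
Proof.
  rewrite <- (sqrt_pow2 (Rabs u + Rabs v))
    by (pose proof (Rabs_pos u); pose proof (Rabs_pos v); lra).
  apply sqrt_le_1_alt.
  rewrite <- (pow2_abs u), <- (pow2_abs v).
  pose proof (pow2_ge_0 (Rabs u - Rabs v)). nra.
Qed.

Lemma abs_add_le_exp_of_sq_le (u v C k t : R) :
  u ^ 2 + v ^ 2 <= C * exp (- (2 * k) * t) ->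
  Rabs u + Rabs v <= sqrt (2 * C) * exp (- k * t).
Proof.
  intros H.
  apply Rle_trans with (sqrt (2 * (u ^ 2 + v ^ 2))); [apply abs_add_le_sqrt|].
  assert (Hexp : exp (- (2 * k) * t) = exp (- k * t) ^ 2)
    by (simpl; rewrite Rmult_1_r, <- exp_plus; f_equal; ring).
  assert (HC : 0 <= C).
  { pose proof (pow2_ge_0 u); pose proof (pow2_ge_0 v); pose proof (exp_pos (- (2 * k) * t)). nra. }
  rewrite <- (sqrt_pow2 (exp (- k * t))) by apply Rlt_le, exp_pos.
  rewrite <- sqrt_mult_alt by lra.
  apply sqrt_le_1_alt. rewrite <- Hexp. lra.
Qed.

Lemma sum_f_R0_swap (A : nat -> nat -> R) (n m : nat) :
  sum_f_R0 (fun i => sum_f_R0 (fun j => A i j) m) n =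
  sum_f_R0 (fun j => sum_f_R0 (fun i => A i j) n) m.
Proof.
  induction n as [|n IH]; simpl; [reflexivity|].
  rewrite IH, <- plus_sum. reflexivity.
Qed.

Lemma sum_f_R0_term_le (f : nat -> R) (m i : nat) :
  (forall k, 0 <= f k) -> (i <= m)%nat -> f i <= sum_f_R0 f m.
Proof.
  intros Hf. induction m as [|m IH]; intros Hi; simpl.
  - replace i with 0%nat by lia. lra.
  - destruct (Nat.eq_dec i (S m)) as [->|Hne].
    + pose proof (cond_pos_sum f m Hf). lra.
    + pose proof (IH ltac:(lia)); pose proof (Hf (S m)). lra.
Qed.

Lemma sum_f_R0_weighted_diffs_nonpos (w n : nat -> R) (m : nat) :
  (forall i j, n i <= n j -> w i <= w j) ->
  sum_f_R0 (fun i => w i * sum_f_R0 (fun j => n j - n i) m) m <= 0.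
Proof.
  intros Hmono.
  set (A := fun i j => w i * (n j - n i)).
  assert (Hrow : sum_f_R0 (fun i => w i * sum_f_R0 (fun j => n j - n i) m) m =
                 sum_f_R0 (fun i => sum_f_R0 (A i) m) m).
  { apply sum_eq; intros i _. rewrite scal_sum. apply sum_eq; intros j _.
    unfold A; ring. }
  assert (Hsym : 2 * sum_f_R0 (fun i => sum_f_R0 (A i) m) m =
                 sum_f_R0 (fun i => sum_f_R0 (fun j => A i j + A j i) m) m).
  { replace (2 * sum_f_R0 (fun i => sum_f_R0 (A i) m) m)
      with (sum_f_R0 (fun i => sum_f_R0 (A i) m) m
            + sum_f_R0 (fun i => sum_f_R0 (fun j => A j i) m) m)
      by (rewrite (sum_f_R0_swap (fun j i => A j i)); ring).
    rewrite <- plus_sum. apply sum_eq; intros i _. rewrite <- plus_sum. reflexivity. }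
  assert (Hpair : sum_f_R0 (fun i => sum_f_R0 (fun j => A i j + A j i) m) m
                  <= sum_f_R0 (fun _ => sum_f_R0 (fun _ => 0) m) m).
  { apply sum_Rle; intros i _. apply sum_Rle; intros j _. unfold A.
    destruct (Rle_dec (n i) (n j)) as [Hij|Hji].
    - pose proof (Hmono i j Hij). nra.
    - pose proof (Hmono j i ltac:(lra)). nra. }
  rewrite !sum_cte, Rmult_0_l, Rmult_0_l in Hpair. lra.
Qed.

Lemma coupling_sub (N : nat) (f : nat -> R) (i j : nat) : (1 <= N)%nat ->
  coupling N f i - coupling N f j = INR N * (f j - f i).
Proof.
  intros HN. unfold coupling. rewrite <- minus_sum.
  rewrite (sum_eq _ (fun _ => f j - f i)) by (intros; ring).
  rewrite sum_cte. replace (S (pred N)) with N by lia. ring.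
Qed.

Definition damping (alpha beta gamma u w : R) : R := (alpha * u ^ 2 + beta * w ^ 2 - gamma) * w.

Lemma disk_convex (x1 y1 x2 y2 R s : R) :
  x1 ^ 2 + y1 ^ 2 <= R -> x2 ^ 2 + y2 ^ 2 <= R -> 0 <= s <= 1 ->
  (x2 + s * (x1 - x2)) ^ 2 + (y2 + s * (y1 - y2)) ^ 2 <= R.
Proof.
  intros H1 H2 Hs.
  assert (0 <= s * (1 - s) * ((x1 - x2) ^ 2 + (y1 - y2) ^ 2)).
  { apply Rmult_le_pos; [nra|].
    pose proof (pow2_ge_0 (x1 - x2)); pose proof (pow2_ge_0 (y1 - y2)); lra. }
  replace ((x2 + s * (x1 - x2)) ^ 2 + (y2 + s * (y1 - y2)) ^ 2)
    with ((1 - s) * (x2 ^ 2 + y2 ^ 2) + s * (x1 ^ 2 + y1 ^ 2)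
          - s * (1 - s) * ((x1 - x2) ^ 2 + (y1 - y2) ^ 2)) by ring.
  nra.
Qed.

Lemma damping_sub_mvt (alpha beta gamma x1 y1 x2 y2 R : R) :
  x1 ^ 2 + y1 ^ 2 <= R -> x2 ^ 2 + y2 ^ 2 <= R ->
  exists xi eta, xi ^ 2 + eta ^ 2 <= R /\
    damping alpha beta gamma x1 y1 - damping alpha beta gamma x2 y2
    = 2 * alpha * xi * eta * (x1 - x2) + (alpha * xi ^ 2 + 3 * beta * eta ^ 2 - gamma) * (y1 - y2).
Proof.
  intros H1 H2.
  pose (px := fun s => x2 + s * (x1 - x2)). pose (py := fun s => y2 + s * (y1 - y2)).
  pose (h := fun s => damping alpha beta gamma (px s) (py s)).
  pose (dh := fun s => 2 * alpha * px s * py s * (x1 - x2)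
                       + (alpha * px s ^ 2 + 3 * beta * py s ^ 2 - gamma) * (y1 - y2)).
  assert (HD : forall s, is_derive h s (dh s)).
  { intro s. unfold h, damping, dh, px, py. auto_derive; [exact I | ring]. }
  destruct (MVT_gen h 0 1 dh) as [s [Hs Heq]].
  - intros s _; apply HD.
  - intros s _. apply continuity_pt_filterlim,
      (ex_derive_continuous (K := R_AbsRing) (V := R_NormedModule)).
    exists (dh s). apply HD.
  - rewrite Rmin_left, Rmax_right in Hs by lra.
    exists (px s), (py s). split; [apply disk_convex; assumption|].
    transitivity (h 1 - h 0); [unfold h, damping, px, py; ring|].
    rewrite Heq. unfold dh. ring.
Qed.

Lemma energy_rate_le (alpha beta gamma k : R) (N : nat) (f g : nat -> R) (i : nat) :
  0 <= alpha -> 0 <= beta -> gamma <= 0 -> 0 <= k ->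
  2 * f i * (g i + k * coupling N f i)
  + 2 * g i * (- (alpha * f i ^ 2 + beta * g i ^ 2 - gamma) * g i - f i + k * coupling N g i)
  <= k * coupling N (fun j => f j ^ 2 + g j ^ 2) i.
Proof.
  intros Ha Hb Hg Hk.
  assert (Hdamp : 0 <= (alpha * f i ^ 2 + beta * g i ^ 2 - gamma) * g i ^ 2).
  { pose proof (pow2_ge_0 (f i)); pose proof (pow2_ge_0 (g i)). apply Rmult_le_pos; nra. }
  assert (Hcoup : 2 * f i * coupling N f i + 2 * g i * coupling N g i
                  <= coupling N (fun j => f j ^ 2 + g j ^ 2) i).
  { unfold coupling. rewrite !scal_sum, <- plus_sum. apply sum_Rle; intros j _.
    pose proof (pow2_ge_0 (f j - f i)); pose proof (pow2_ge_0 (g j - g i)). nra. }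
  apply Rmult_le_compat_l with (r := k) in Hcoup; [|exact Hk].
  nra.
Qed.

Lemma quad_form_ge (P Q b eps u v : R) :
  0 <= eps < P -> eps * (P + Q) <= P * Q - b ^ 2 ->
  eps * (u ^ 2 + v ^ 2) <= P * u ^ 2 + Q * v ^ 2 + 2 * b * u * v.
Proof.
  intros [He HP] Hdet.
  assert (Hsq : 0 <= (P - eps) * (P * u ^ 2 + Q * v ^ 2 + 2 * b * u * v - eps * (u ^ 2 + v ^ 2))).
  { replace ((P - eps) * (P * u ^ 2 + Q * v ^ 2 + 2 * b * u * v - eps * (u ^ 2 + v ^ 2)))
      with (((P - eps) * u + b * v) ^ 2 + ((P - eps) * (Q - eps) - b ^ 2) * v ^ 2) by ring.
    pose proof (pow2_ge_0 ((P - eps) * u + b * v)).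
    assert (0 <= ((P - eps) * (Q - eps) - b ^ 2) * v ^ 2)
      by (apply Rmult_le_pos; [nra | apply pow2_ge_0]).
    lra. }
  assert (0 <= P * u ^ 2 + Q * v ^ 2 + 2 * b * u * v - eps * (u ^ 2 + v ^ 2))
    by (apply Rmult_le_reg_l with (P - eps); lra).
  lra.
Qed.

(* Determinant of the symmetric part [[K, alpha xi eta], [alpha xi eta, K - gamma + alpha xi^2
   + 3 beta eta^2]] of the linearised error dynamics, with [u = xi^2] and [v = eta^2]. *)
Definition sync_det (K alpha beta gamma u v : R) : R :=
  K * (K - gamma + alpha * u + 3 * beta * v) - alpha ^ 2 * u * v.

Definition sync_det_unif_pos (K alpha beta gamma R : R) : Prop :=
  exists m, 0 < m /\ forall u v, 0 <= u -> 0 <= v -> u + v <= R ->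
    m <= sync_det K alpha beta gamma u v.

(* By [quad_form_ge], this makes that symmetric part at least [eps] times the identity:
   [2 K - gamma + alpha u + 3 beta v] is its trace. *)
Definition contraction_rate (K alpha beta gamma R eps : R) : Prop :=
  0 < eps < K /\ forall u v, 0 <= u -> 0 <= v -> u + v <= R ->
    eps * (2 * K - gamma + alpha * u + 3 * beta * v) <= sync_det K alpha beta gamma u v.

Lemma sync_det_unif_pos_of_edge (K alpha beta gamma R m : R) :
  0 < K -> 0 <= alpha -> 0 < m -> m <= K * (K - gamma) ->
  (forall u, 0 <= u <= R -> m <= sync_det K alpha beta gamma u (R - u)) ->
  sync_det_unif_pos K alpha beta gamma R.
Proof.
  intros HK Ha Hm Hm0 Hedge. exists m. split; [exact Hm|].
  intros u v Hu Hv Huv.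
  pose proof (Hedge u ltac:(lra)) as He. unfold sync_det in *.
  assert (HKau : 0 <= K * alpha * u) by (apply Rmult_le_pos; nra).
  destruct (Rle_dec 0 (3 * K * beta - alpha ^ 2 * u)) as [Hc|Hc].
  - assert (0 <= v * (3 * K * beta - alpha ^ 2 * u)) by (apply Rmult_le_pos; lra). nra.
  - assert (0 <= (R - u - v) * - (3 * K * beta - alpha ^ 2 * u)) by (apply Rmult_le_pos; lra).
    nra.
Qed.

Lemma sync_det_unif_pos_cond1 (K beta gamma R : R) :
  0 < K -> gamma < K -> 0 <= beta -> sync_det_unif_pos K 0 beta gamma R.
Proof.
  intros HK Hg Hb. exists (K * (K - gamma)). split; [nra|].
  intros u v Hu Hv _. unfold sync_det.
  assert (0 <= K * (3 * beta * v)) by (apply Rmult_le_pos; nra). nra.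
Qed.

Lemma sync_det_unif_pos_cond2 (K alpha beta gamma R : R) :
  0 < K -> gamma < K -> 0 <= alpha -> 0 <= beta -> 0 <= R ->
  alpha ^ 2 * R <= K * alpha - 3 * K * beta -> sync_det_unif_pos K alpha beta gamma R.
Proof.
  intros HK Hg Ha Hb HR Hcond.
  apply (sync_det_unif_pos_of_edge _ _ _ _ _ (K * (K - gamma))); try nra.
  intros u Hu. unfold sync_det.
  assert (0 <= u * (K * alpha - 3 * K * beta - alpha ^ 2 * R)) by (apply Rmult_le_pos; lra).
  assert (0 <= K * beta * R) by (apply Rmult_le_pos; nra).
  assert (0 <= (alpha * u) ^ 2) by apply pow2_ge_0.
  nra.
Qed.

Lemma sync_det_unif_pos_cond3 (K alpha beta gamma R : R) :
  0 < K -> gamma < K -> 0 <= alpha -> 0 <= beta -> 0 <= R ->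
  alpha ^ 2 * R <= 3 * K * beta - K * alpha -> sync_det_unif_pos K alpha beta gamma R.
Proof.
  intros HK Hg Ha Hb HR Hcond.
  apply (sync_det_unif_pos_of_edge _ _ _ _ _ (K * (K - gamma))); try nra.
  intros u Hu. unfold sync_det.
  assert (0 <= (R - u) * (3 * K * beta - K * alpha - alpha ^ 2 * R))
    by (apply Rmult_le_pos; lra).
  assert (0 <= K * alpha * R) by (apply Rmult_le_pos; nra).
  assert (0 <= (alpha * (R - u)) ^ 2) by apply pow2_ge_0.
  nra.
Qed.

(* On the edge [v = R - u], [4 alpha^2 sync_det] is [(2 alpha^2 u + B)^2 + E], and the
   interval condition on [alpha^2 R] is exactly [E > 0]. *)
Lemma sync_det_unif_pos_cond4 (K alpha beta gamma R : R) :
  0 < K -> gamma < K -> 0 <= alpha -> 0 <= beta -> alpha <> 0 ->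
  let S := sqrt (K * (3 * K * alpha * beta + alpha ^ 2 * (K - gamma))) in
  K * alpha + 3 * K * beta - 2 * S < alpha ^ 2 * R < K * alpha + 3 * K * beta + 2 * S ->
  sync_det_unif_pos K alpha beta gamma R.
Proof.
  intros HK Hg Ha Hb Hn S [Hlo Hhi].
  assert (Ha2 : 0 < alpha ^ 2) by (apply pow2_gt_0; exact Hn).
  assert (HS : S * S = K * (3 * K * alpha * beta + alpha ^ 2 * (K - gamma))).
  { apply sqrt_sqrt. apply Rmult_le_pos; [lra|].
    assert (0 <= K * alpha * beta) by (apply Rmult_le_pos; nra). nra. }
  set (B := K * alpha - 3 * K * beta - alpha ^ 2 * R).
  set (E := 4 * alpha ^ 2 * (K * (K - gamma) + 3 * K * beta * R) - B ^ 2).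
  assert (HE : 0 < E).
  { assert (HEfact : E = (alpha ^ 2 * R - (K * alpha + 3 * K * beta) + 2 * S)
                         * (K * alpha + 3 * K * beta + 2 * S - alpha ^ 2 * R)).
    { transitivity (4 * (S * S) - (alpha ^ 2 * R - (K * alpha + 3 * K * beta)) ^ 2).
      - rewrite HS. unfold E, B. ring.
      - ring. }
    rewrite HEfact. apply Rmult_lt_0_compat; lra. }
  apply (sync_det_unif_pos_of_edge _ _ _ _ _ (Rmin (K * (K - gamma)) (E / (4 * alpha ^ 2))));
    [lra | lra | apply Rmin_glb_lt; [nra | apply Rdiv_lt_0_compat; lra] | apply Rmin_l |].
  intros u Hu.
  apply Rle_trans with (E / (4 * alpha ^ 2)); [apply Rmin_r|].
  apply Rle_div_l; [lra|].
  replace (sync_det K alpha beta gamma u (R - u) * (4 * alpha ^ 2))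
    with ((2 * alpha ^ 2 * u + B) ^ 2 + E) by (unfold sync_det, E, B; ring).
  pose proof (pow2_ge_0 (2 * alpha ^ 2 * u + B)). lra.
Qed.

Lemma contraction_rate_of_sync_det_unif_pos (K alpha beta gamma R : R) :
  0 < K -> gamma < K -> 0 <= alpha -> 0 <= beta -> 0 <= R ->
  sync_det_unif_pos K alpha beta gamma R -> exists eps, contraction_rate K alpha beta gamma R eps.
Proof.
  intros HK Hg Ha Hb HR [m [Hm Hdet]].
  set (M := 2 * K - gamma + (alpha + 3 * beta) * R).
  assert (HM : 0 < M) by (unfold M; nra).
  exists (Rmin (K / 2) (m / M)). split.
  - split; [apply Rmin_glb_lt; [lra | apply Rdiv_lt_0_compat; lra]|].
    apply Rle_lt_trans with (K / 2); [apply Rmin_l | lra].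
  - intros u v Hu Hv Huv.
    assert (Heps : 0 <= Rmin (K / 2) (m / M))
      by (apply Rmin_glb; [lra | apply Rlt_le, Rdiv_lt_0_compat; lra]).
    apply Rle_trans with (Rmin (K / 2) (m / M) * M).
    { apply Rmult_le_compat_l; [exact Heps|]. unfold M. nra. }
    apply Rle_trans with m; [|apply Hdet; assumption].
    apply Rle_div_r; [exact HM | apply Rmin_r].
Qed.

Definition sync_conditions (alpha beta gamma c a r : R) : Prop :=
  (alpha = 0 /\ 3 * beta * r^2 > gamma - c * a)
  \/ (alpha <> 0 /\ alpha > 3 * beta
      /\ r^2 <= (c * a * alpha - 3 * c * a * beta) / alpha^2
      /\ 3 * beta * r^2 > gamma - c * a)
  \/ (alpha <> 0 /\ alpha < 3 * beta
      /\ r^2 <= (3 * c * a * beta - c * a * alpha) / alpha^2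
      /\ alpha * r^2 > gamma - c * a)
  \/ (3 * c * a * alpha * beta + alpha^2 * (c * a - gamma) > 0
      /\ r^2 >= Rmax ((c * a * alpha - 3 * c * a * beta) / alpha^2)
                     ((3 * c * a * beta - c * a * alpha) / alpha^2)
      /\ (c * a * alpha + 3 * c * a * beta
          - 2 * sqrt (3 * c^2 * a^2 * alpha * beta
                      + alpha^2 * c * a * (c * a - gamma))) / alpha^2 < r^2
      /\ r^2 < (c * a * alpha + 3 * c * a * beta
          + 2 * sqrt (3 * c^2 * a^2 * alpha * beta
                      + alpha^2 * c * a * (c * a - gamma))) / alpha^2).

Lemma sync_det_unif_pos_of_conditions (alpha beta gamma c a r : R) :
  0 <= alpha -> 0 <= beta -> gamma < 0 -> 0 < c * a ->
  sync_conditions alpha beta gamma c a r -> sync_det_unif_pos (c * a) alpha beta gamma (r ^ 2).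
Proof.
  intros Ha Hb Hg HK Hcond.
  assert (HR : 0 <= r ^ 2) by apply pow2_ge_0.
  destruct Hcond as [[-> _] | [[Hn [_ [Hr _]]] | [[Hn [_ [Hr _]]] | [Hpos [_ [Hlo Hhi]]]]]].
  - apply sync_det_unif_pos_cond1; lra.
  - apply sync_det_unif_pos_cond2; try lra.
    apply Rle_div_r in Hr; [lra | apply pow2_gt_0, Hn].
  - apply sync_det_unif_pos_cond3; try lra.
    apply Rle_div_r in Hr; [lra | apply pow2_gt_0, Hn].
  - assert (Hn : alpha <> 0) by (intros ->; lra).
    assert (Ha2 : 0 < alpha ^ 2) by (apply pow2_gt_0, Hn).
    replace (3 * c ^ 2 * a ^ 2 * alpha * beta + alpha ^ 2 * c * a * (c * a - gamma))
      with (c * a * (3 * (c * a) * alpha * beta + alpha ^ 2 * (c * a - gamma))) in Hlo, Hhi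
      by ring.
    apply (proj1 (Rlt_div_l _ _ _ Ha2)) in Hlo. apply (proj2 (Rlt_div_r _ _ _ Ha2)) in Hhi.
    apply sync_det_unif_pos_cond4; lra.
Qed.

Section CoupledOscillators.

Variables (alpha beta gamma omega c a : R) (N : nat) (x y : nat -> R -> R).
Hypotheses (Halpha : 0 <= alpha) (Hbeta : 0 <= beta) (Hgamma : gamma < 0)
  (Homega : omega ^ 2 = 1) (Hca : 0 < c * a) (HN : (1 <= N)%nat)
  (Hsol : is_solution alpha beta gamma omega c a N x y).

Definition xdot (i : nat) (t : R) : R := y i t + c * a / INR N * coupling N (fun j => x j t) i.

Definition ydot (i : nat) (t : R) : R :=
  - (alpha * x i t ^ 2 + beta * y i t ^ 2 - gamma) * y i t - omega ^ 2 * x i t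
  + c * a / INR N * coupling N (fun j => y j t) i.

Definition excess (r : R) (i : nat) (t : R) : R := Rmax 0 (x i t ^ 2 + y i t ^ 2 - r ^ 2).

Lemma excess_energy_rate_nonpos (r t : R) :
  sum_f_R0 (fun i => 2 * excess r i t * (2 * x i t * xdot i t + 2 * y i t * ydot i t)) (pred N)
  <= 0.
Proof.
  assert (Hk : 0 <= c * a / INR N)
    by (apply Rlt_le, Rdiv_lt_0_compat; [exact Hca | apply lt_0_INR; lia]).
  set (k := c * a / INR N) in Hk.
  apply Rle_trans with (sum_f_R0 (fun i => (2 * k * excess r i t)
      * coupling N (fun j => x j t ^ 2 + y j t ^ 2) i) (pred N)).
  - apply sum_Rle; intros i _.
    assert (Hrate : 2 * x i t * xdot i t + 2 * y i t * ydot i t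
                    <= k * coupling N (fun j => x j t ^ 2 + y j t ^ 2) i).
    { unfold xdot, ydot. rewrite Homega, Rmult_1_l.
      apply (energy_rate_le alpha beta gamma k N (fun j => x j t) (fun j => y j t)); lra. }
    pose proof (Rmax_l 0 (x i t ^ 2 + y i t ^ 2 - r ^ 2)).
    unfold excess. nra.
  - apply sum_f_R0_weighted_diffs_nonpos. intros i j Hij. cbv beta.
    apply Rmult_le_compat_l; [lra|].
    apply Rle_max_compat_l. lra.
Qed.

Lemma disk_invariant (r : R) :
  (forall i, (i < N)%nat -> x i 0 ^ 2 + y i 0 ^ 2 <= r ^ 2) ->
  forall t, 0 <= t -> forall i, (i < N)%nat -> x i t ^ 2 + y i t ^ 2 <= r ^ 2.
Proof.
  intros Hinit.
  set (W := fun t => sum_f_R0 (fun i => excess r i t ^ 2) (pred N)).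
  assert (HW : forall t, 0 <= t -> is_derive W t (sum_f_R0 (fun i =>
      2 * excess r i t * (2 * x i t * xdot i t + 2 * y i t * ydot i t)) (pred N))).
  { intros t Ht. apply is_derive_sum_f_R0. intros i Hi.
    destruct (Hsol t Ht i ltac:(lia)) as [Hx Hy].
    apply (is_derive_pos_part_sq_comp (fun s => x i s ^ 2 + y i s ^ 2)).
    apply is_derive_sq_plus_sq; assumption. }
  assert (HW0 : W 0 = 0).
  { unfold W. rewrite (sum_eq _ (fun _ => 0)), sum_cte; [ring|].
    intros i Hi. unfold excess. rewrite Rmax_left; [ring|].
    pose proof (Hinit i ltac:(lia)). lra. }
  intros t Ht i Hi.
  pose proof (le_at_0_of_derive_nonpos W _ HW (fun s _ => excess_energy_rate_nonpos r s) t Ht).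
  assert (Hexc : excess r i t ^ 2 <= W t).
  { apply (sum_f_R0_term_le (fun i => excess r i t ^ 2)); [intro; apply pow2_ge_0 | lia]. }
  unfold excess in Hexc. pose proof (Rmax_l 0 (x i t ^ 2 + y i t ^ 2 - r ^ 2)).
  pose proof (Rmax_r 0 (x i t ^ 2 + y i t ^ 2 - r ^ 2)). nra.
Qed.

Lemma xdot_sub (i j : nat) (t : R) :
  xdot i t - xdot j t = (y i t - y j t) - c * a * (x i t - x j t).
Proof.
  unfold xdot. pose proof (coupling_sub N (fun k => x k t) i j HN) as Hc.
  assert (HNpos : 0 < INR N) by (apply lt_0_INR; lia).
  replace (y i t + c * a / INR N * coupling N (fun k => x k t) i
           - (y j t + c * a / INR N * coupling N (fun k => x k t) j))
    with (y i t - y j t + c * a / INR N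
          * (coupling N (fun k => x k t) i - coupling N (fun k => x k t) j)) by ring.
  rewrite Hc. field. lra.
Qed.

Lemma ydot_sub (i j : nat) (t : R) :
  ydot i t - ydot j t =
  - (damping alpha beta gamma (x i t) (y i t) - damping alpha beta gamma (x j t) (y j t))
  - (x i t - x j t) - c * a * (y i t - y j t).
Proof.
  unfold ydot, damping. pose proof (coupling_sub N (fun k => y k t) i j HN) as Hc.
  assert (HNpos : 0 < INR N) by (apply lt_0_INR; lia).
  rewrite Homega.
  set (ci := coupling N (fun k => y k t) i) in *. set (cj := coupling N (fun k => y k t) j) in *.
  replace ci with (cj + INR N * (y j t - y i t)) by lra.
  field. lra.
Qed.

Lemma error_rate_le (r eps : R) (i j : nat) (t : R) :
  contraction_rate (c * a) alpha beta gamma (r ^ 2) eps ->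
  x i t ^ 2 + y i t ^ 2 <= r ^ 2 -> x j t ^ 2 + y j t ^ 2 <= r ^ 2 ->
  2 * (x i t - x j t) * (xdot i t - xdot j t) + 2 * (y i t - y j t) * (ydot i t - ydot j t)
  <= - (2 * eps) * ((x i t - x j t) ^ 2 + (y i t - y j t) ^ 2).
Proof.
  intros [Heps Hdet] Hi Hj.
  rewrite xdot_sub, ydot_sub.
  destruct (damping_sub_mvt alpha beta gamma (x i t) (y i t) (x j t) (y j t) (r ^ 2) Hi Hj)
    as [xi [eta [Hin Hmvt]]].
  rewrite Hmvt.
  pose proof (Hdet (xi ^ 2) (eta ^ 2) (pow2_ge_0 xi) (pow2_ge_0 eta) Hin) as Hd.
  unfold sync_det in Hd.
  pose proof (quad_form_ge (c * a) (c * a - gamma + alpha * xi ^ 2 + 3 * beta * eta ^ 2)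
                (alpha * xi * eta) eps (x i t - x j t) (y i t - y j t)
                ltac:(lra) ltac:(lra)).
  nra.
Qed.

Lemma error_sq_decay (r eps : R) (i j : nat) :
  (forall t, 0 <= t -> forall k, (k < N)%nat -> x k t ^ 2 + y k t ^ 2 <= r ^ 2) ->
  contraction_rate (c * a) alpha beta gamma (r ^ 2) eps -> (i < N)%nat -> (j < N)%nat ->
  forall t, 0 <= t -> (x i t - x j t) ^ 2 + (y i t - y j t) ^ 2
    <= ((x i 0 - x j 0) ^ 2 + (y i 0 - y j 0) ^ 2) * exp (- (2 * eps) * t).
Proof.
  intros Hdisk Hrate Hi Hj.
  apply (le_exp_of_derive_le (fun t => (x i t - x j t) ^ 2 + (y i t - y j t) ^ 2)
    (fun t => 2 * (x i t - x j t) * (xdot i t - xdot j t)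
              + 2 * (y i t - y j t) * (ydot i t - ydot j t))).
  - intros t Ht. destruct (Hsol t Ht i Hi) as [Hxi Hyi]. destruct (Hsol t Ht j Hj) as [Hxj Hyj].
    apply (is_derive_sq_plus_sq (fun s => x i s - x j s) (fun s => y i s - y j s)).
    + apply (is_derive_sub (x i) (x j)); assumption.
    + apply (is_derive_sub (y i) (y j)); assumption.
  - intros t Ht. apply (error_rate_le r); [exact Hrate | apply Hdisk; assumption ..].
Qed.

End CoupledOscillators.

Theorem theorem4p8 (alpha beta gamma omega c a r : R) (N : nat)
  (x y : nat -> R -> R) :
  0 <= alpha -> 0 <= beta -> gamma < 0 -> omega ^ 2 = 1 ->
  0 < c * a -> (2 <= N)%nat -> 0 < r ->
  ( (alpha = 0 /\ 3 * beta * r^2 > gamma - c * a)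
    \/ (alpha <> 0 /\ alpha > 3 * beta
        /\ r^2 <= (c * a * alpha - 3 * c * a * beta) / alpha^2
        /\ 3 * beta * r^2 > gamma - c * a)
    \/ (alpha <> 0 /\ alpha < 3 * beta
        /\ r^2 <= (3 * c * a * beta - c * a * alpha) / alpha^2
        /\ alpha * r^2 > gamma - c * a)
    \/ (3 * c * a * alpha * beta + alpha^2 * (c * a - gamma) > 0
        /\ r^2 >= Rmax ((c * a * alpha - 3 * c * a * beta) / alpha^2)
                       ((3 * c * a * beta - c * a * alpha) / alpha^2)
        /\ (c * a * alpha + 3 * c * a * beta
            - 2 * sqrt (3 * c^2 * a^2 * alpha * beta
                        + alpha^2 * c * a * (c * a - gamma))) / alpha^2 < r^2
        /\ r^2 < (c * a * alpha + 3 * c * a * beta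
            + 2 * sqrt (3 * c^2 * a^2 * alpha * beta
                        + alpha^2 * c * a * (c * a - gamma))) / alpha^2) ) ->
  is_solution alpha beta gamma omega c a N x y ->
  (forall i, (i < N)%nat -> (x i 0)^2 + (y i 0)^2 <= r^2) ->
  forall i j, (i < N)%nat -> (j < N)%nat ->
    exists C lam, 0 < lam /\
      forall t, 0 <= t ->
        Rabs (x i t - x j t) + Rabs (y i t - y j t) <= C * exp (- lam * t).
Proof.
  intros Ha Hb Hg Ho HK HN Hr Hcond Hsol Hinit i j Hi Hj.
  assert (HN1 : (1 <= N)%nat) by lia.
  pose proof (disk_invariant alpha beta gamma omega c a N x y Ha Hb Hg Ho HK HN1 Hsol r Hinit)
    as Hdisk.
  destruct (contraction_rate_of_sync_det_unif_pos (c * a) alpha beta gamma (r ^ 2))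
    as [eps Heps]; try lra.
  { apply pow2_ge_0. }
  { apply sync_det_unif_pos_of_conditions; assumption. }
  exists (sqrt (2 * ((x i 0 - x j 0) ^ 2 + (y i 0 - y j 0) ^ 2))), eps.
  split; [apply Heps|].
  intros t Ht. apply abs_add_le_exp_of_sq_le.
  apply (error_sq_decay alpha beta gamma omega c a N x y Ho HN1 Hsol r); assumption.
Qed.
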